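(* Let $S=\{213,231,312,321\}$, let $t_n$ be the number of rooted labeled trees on $[n]$ avoiding $S$ (with $t_0=0$), and let $T(x)=\sum_{n\ge0}\frac{t_n}{n!}x^n$. Then $T$ satisfies the differential equation $T'=T+e^{T}$ with initial condition $T(0)=0$.
   Context: A rooted labeled tree on $[n]$ is an unordered tree on $n$ vertices with a distinguished root and distinct labels from $[n]$. An instance of a pattern (permutation) $\pi$ of $[k]$ is a sequence of vertices $v_1,\dots,v_k$ with $v_i$ a strict ancestor of $v_{i+1}$ whose labels are in the same relative order as $\pi$; a tree avoids $S$ if it contains no instance of any pattern in $S$. *)

From mathcomp Require Import all_boot all_order all_algebra.
Set Implicit Arguments. Unset Strict Implicit. Unset Printing Implicit Defensive.
Import GRing.Theory Num.Theory.

(* Vertices are 'I_n = {0,...,n-1}; the label of a vertex is its value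
   (order-isomorphic to labelling by [n] = {1,...,n}).
   A rooted tree is encoded by its parent function p : vertex -> option vertex,
   p v = None iff v is the root. *)

Definition pstep (n : nat) (p : {ffun 'I_n -> option 'I_n}) (x : option 'I_n)
  : option 'I_n := if x is Some y then p y else None.

Definition is_rooted_tree (n : nat) (p : {ffun 'I_n -> option 'I_n}) : bool :=
  (#|[pred x | p x == None]| == 1) &&
  [forall v : 'I_n, exists k : 'I_n.+1, iter k (pstep p) (Some v) == None].

Definition strict_anc (n : nat) (p : {ffun 'I_n -> option 'I_n}) (u v : 'I_n)
  : bool :=
  [exists k : 'I_n.+1, (0 < k)%N && (iter k (pstep p) (Some v) == Some u)].

Definition contains (n : nat) (p : {ffun 'I_n -> option 'I_n}) (pi : seq nat)
  : bool :=
  [exists s : (size pi).-tuple 'I_n,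
     sorted (strict_anc p) s &&
     [forall i : 'I_(size pi), forall j : 'I_(size pi),
        ((val (tnth s i) < val (tnth s j))%N ==
         (nth 0 pi i < nth 0 pi j)%N)]].

Definition avoids (n : nat) (p : {ffun 'I_n -> option 'I_n}) (S : seq (seq nat))
  : bool := all (fun pi => ~~ contains p pi) S.

Definition S5p12 : seq (seq nat) :=
  [:: [:: 2; 1; 3]; [:: 2; 3; 1]; [:: 3; 1; 2]; [:: 3; 2; 1]].

(* t_n = number of rooted labeled trees on [n] avoiding S (t_0 = 0 since a
   tree needs a root). *)
Definition tcount (S : seq (seq nat)) (n : nat) : nat :=
  #|[pred p : {ffun 'I_n -> option 'I_n} | is_rooted_tree p && avoids p S]|.

Local Open Scope ring_scope.
Definition fps := nat -> rat.
Definition fps_one : fps := fun n => if n is 0 then 1 else 0.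
Definition fps_mul (a b : fps) : fps :=
  fun n => \sum_(i < n.+1) a i * b (n - i)%N.
Definition fps_pow (a : fps) (k : nat) : fps := iter k (fps_mul a) fps_one.
Definition fps_deriv (a : fps) : fps := fun n => (n.+1)%:R * a n.+1.
(* exp(a) = sum_k a^k / k!, for a series with zero constant term (then a^k
   has order >= k, so only k <= n contribute to the n-th coefficient). *)
Definition fps_exp (a : fps) : fps :=
  fun n => \sum_(k < n.+1) fps_pow a k n / (k`!)%:R.
Definition egf (t : nat -> nat) : fps := fun n => (t n)%:R / (n`!)%:R.

From mathcomp Require Import all_boot all_order all_algebra.
From mathcomp Require Import zify ring.
Set Implicit Arguments. Unset Strict Implicit. Unset Printing Implicit Defensive.
Import GRing.Theory Num.Theory.

(* A tree avoids {213, 231, 312, 321} exactly when, whenever a is a strict ancestor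
   of b and b of c, the label of a is smaller than those of b and c; call such
   parent functions admissible. Count admissible trees and forests on an
   arbitrary vertex set X: both counts depend only on |X|, say t_n and f_n. Let mu
   be the least vertex of X. In an admissible tree either mu is the root, and
   deleting it leaves an admissible forest, or mu is a leaf hanging from the root,
   and deleting it leaves an admissible tree; so t_(n+1) = f_n + t_n. In an
   admissible forest the component of mu is an admissible tree on some Y containing
   mu and the rest is an admissible forest on X \ Y; so
   f_(n+1) = sum_k C(n,k) t_(k+1) f_(n-k). For the exponential generating functions
   this says T' = T + F and F' = T' F with T(0) = 0 and F(0) = 1, hence F = exp T
   and T' = T + exp T. *)

Lemma card_in_bij (T U : finType) (A : {pred T}) (B : {pred U})
    (f : T -> U) (g : U -> T) :
  {in A, forall x, f x \in B} -> {in B, forall y, g y \in A} ->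
  {in A, cancel f g} -> {in B, cancel g f} -> #|A| = #|B|.
Proof.
move=> fA gB fK gK; rewrite -(card_in_imset (can_in_inj fK)).
apply: eq_card => y; apply/imsetP/idP => [[x Ax ->]|By]; first exact: fA.
by exists (g y); rewrite ?gK ?gB.
Qed.

Section ParentFunctions.
Variable N : nat.
Local Notation V := 'I_N.
Local Notation PF := {ffun V -> option V}.
Implicit Types (p q : PF) (X Y : {set V}).

(** * Ancestors *)

Definition terminates p v := exists k, iter k (pstep p) (Some v) = None.
Definition ancestor p u v := exists2 k, 0 < k & iter k (pstep p) (Some v) = Some u.

Lemma iter_pstep_None p k : iter k (pstep p) None = None.
Proof. by elim: k => //= k ->. Qed.

Lemma iter_pstepS p k v : iter k.+1 (pstep p) (Some v) = iter k (pstep p) (p v).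
Proof. by rewrite iterSr. Qed.

Lemma iter_pstep_None_ge p v m k :
  iter m (pstep p) (Some v) = None -> m <= k -> iter k (pstep p) (Some v) = None.
Proof. by move=> vm /subnK <-; rewrite iterD vm iter_pstep_None. Qed.

(* The iterates before the first [None] are pairwise distinct vertices. *)
Lemma terminates_within p v : terminates p v ->
  exists2 m, m <= N & iter m (pstep p) (Some v) = None.
Proof.
move=> [k vk]; have exm : exists k, iter k (pstep p) (Some v) == None.
  by exists k; apply/eqP.
case: (ex_minnP exm) => m /eqP vm m_min; exists m => //.
pose g (j : 'I_m) : V := odflt v (iter j (pstep p) (Some v)).
have gE (j : 'I_m) : iter j (pstep p) (Some v) = Some (g j).
  rewrite /g; case E: (iter j _ _) => [w|] //=.
  by have := m_min j; rewrite E eqxx => /(_ isT); rewrite leqNgt ltn_ord.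
have g_inj : injective g.
  move=> i j gij; apply/val_inj/eqP; apply: contraT => ij.
  wlog lt_ij : i j gij ij / i < j.
    move=> W; case: (ltngtP i j) => [lt|lt|e]; first exact: (W i j).
      by apply: (W j i (esym gij)); rewrite // eq_sym.
    by case/negP: ij; apply/eqP; exact: e.
  have : iter (m - j + i) (pstep p) (Some v) = None.
    by rewrite iterD gE gij -gE -iterD subnK ?vm // ltnW.
  move/eqP/m_min; have := ltn_ord j; lia.
by have := leq_card g g_inj; rewrite !card_ord.
Qed.

Lemma terminatesP p v :
  reflect (terminates p v) [exists k : 'I_N.+1, iter k (pstep p) (Some v) == None].
Proof.
apply: (iffP existsP) => [[k /eqP vk]|/terminates_within[m m_le vm]].
  by exists k.
by exists (Ordinal (m_le : m < N.+1)); apply/eqP.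
Qed.

Lemma strict_ancP p u v : terminates p v -> reflect (ancestor p u v) (strict_anc p u v).
Proof.
move=> v_term; apply: (iffP existsP) => [[k /andP[k_gt0 /eqP vk]]|[k k_gt0 vk]].
  by exists k.
have [m m_le vm] := terminates_within v_term.
have k_lt : k < m.
  by rewrite ltnNge; apply/negP => /(iter_pstep_None_ge vm); rewrite vk.
by exists (Ordinal (ltnW (leq_trans k_lt m_le) : k < N.+1)); rewrite /= k_gt0; apply/eqP.
Qed.

Lemma strict_anc_ancestor p u v : strict_anc p u v -> ancestor p u v.
Proof. by case/existsP => k /andP[k_gt0 /eqP vk]; exists k. Qed.

Lemma parent_ancestor p u v : p v = Some u -> ancestor p u v.
Proof. by exists 1. Qed.

Lemma ancestor_trans p a b c : ancestor p a b -> ancestor p b c -> ancestor p a c.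
Proof.
move=> [k k_gt0 bk] [j j_gt0 cj]; exists (k + j); first by rewrite addn_gt0 k_gt0.
by rewrite iterD cj.
Qed.

Lemma ancestor_parent p u v :
  ancestor p u v -> exists2 w, p v = Some w & u = w \/ ancestor p u w.
Proof.
case=> -[//|k] _; rewrite iter_pstepS; case: (p v) => [w|]; last by rewrite iter_pstep_None.
by case: k => [[<-]|k wk]; exists w => //; [left|right; exists k.+1].
Qed.

Lemma ancestor_nonroot p u v : ancestor p u v -> p v != None.
Proof. by case/ancestor_parent => w ->. Qed.

Lemma ancestor_irrefl p v : terminates p v -> ~ ancestor p v v.
Proof.
move=> [m vm] [k k_gt0 vk].
have vkj j : iter (k * j) (pstep p) (Some v) = Some v.
  by elim: j => [|j IH]; rewrite ?muln0 // mulnS iterD IH vk.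
by have := vkj m; rewrite (iter_pstep_None_ge vm) // leq_pmull.
Qed.

Lemma root_above p v : terminates p v ->
  exists2 r, r = v \/ ancestor p r v & p r = None.
Proof.
case=> k; elim: k v => [//|k IH] v; rewrite iter_pstepS.
case E: (p v) => [u|] uk; last by exists v; [left|].
case: (IH u uk) => r ru pr; exists r => //; right.
by case: ru => [->|ru]; [exact: parent_ancestor|exact: ancestor_trans ru (parent_ancestor E)].
Qed.

Definition prunes q p := forall w, q w = p w \/ q w = None.

Section Pruning.
Variables p q : PF.
Hypothesis qp : prunes q p.

Lemma prunes_iter k x :
  iter k (pstep q) x = None \/ iter k (pstep q) x = iter k (pstep p) x.
Proof.
elim: k x => [|k IH] x /=; first by right.
case: (IH x) => ->; first by left.
case: (iter k (pstep p) x) => [w|] /=; last by left.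
by case: (qp w) => ->; [right|left].
Qed.

Lemma prunes_terminates v : terminates p v -> terminates q v.
Proof. by move=> [k vk]; exists k; case: (prunes_iter k (Some v)) => // ->. Qed.

Lemma prunes_ancestor u v : ancestor q u v -> ancestor p u v.
Proof. by move=> [k k_gt0 vk]; exists k => //; case: (prunes_iter k (Some v)); rewrite vk. Qed.

End Pruning.

Section CutEdgesInto.
Variables (p q : PF) (mu : V).
Hypothesis qp : forall w, q w = p w \/ p w = Some mu.
Hypothesis p_mu : p mu = None.

Lemma cut_iter k x : [\/ iter k (pstep q) x = iter k (pstep p) x,
  iter k (pstep p) x = Some mu | iter k (pstep p) x = None].
Proof.
elim: k x => [|k IH] x; first exact: Or31.
rewrite !iterS; case: (IH x) => [->|->|->] /=; rewrite ?p_mu; try exact: Or33.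
case: (iter k (pstep p) x) => [w|] /=; last exact: Or31.
by case: (qp w) => ->; [apply: Or31|apply: Or32].
Qed.

Lemma cut_ancestor a b : ancestor p a b -> ancestor q a b \/ a = mu.
Proof.
move=> [k k_gt0 bk]; have := cut_iter k (Some b); rewrite bk => -[qbk|[->]|//].
  by left; exists k.
by right.
Qed.

Lemma cut_terminates v : terminates q v -> terminates p v.
Proof.
move=> [k vk]; case: (cut_iter k (Some v)) => pvk; first by exists k; rewrite -pvk.
  by exists k.+1; rewrite iterS pvk /= p_mu.
by exists k.
Qed.

End CutEdgesInto.

Definition closed_under p (A : pred V) := forall w u, A w -> p w = Some u -> A u.

Lemma closed_iter p (A : pred V) : closed_under p A ->
  forall k v u, A v -> iter k (pstep p) (Some v) = Some u -> A u.
Proof.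
move=> pA; elim=> [|k IH] v u Av; first by case=> <-.
rewrite iter_pstepS; case E: (p v) => [w|]; last by rewrite iter_pstep_None.
exact/IH/(pA _ _ Av E).
Qed.

Lemma ancestor_closed p (A : pred V) u v :
  closed_under p A -> A v -> ancestor p u v -> A u.
Proof. by move=> pA Av [k _ vk]; exact: closed_iter vk. Qed.

Section Agreement.
Variables (p q : PF) (A : pred V).
Hypothesis pq : forall w, A w -> p w = q w.
Hypothesis qA : closed_under q A.

Lemma agree_iter k v : A v -> iter k (pstep p) (Some v) = iter k (pstep q) (Some v).
Proof.
elim: k v => [//|k IH] v Av; rewrite !iter_pstepS pq //.
by case E: (q v) => [u|]; [exact/IH/(qA Av E)|rewrite !iter_pstep_None].
Qed.

Lemma agree_ancestor u v : A v -> ancestor p u v <-> ancestor q u v.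
Proof. by move=> Av; split=> -[k k_gt0 vk]; exists k; rewrite // -vk agree_iter. Qed.

Lemma agree_terminates v : A v -> terminates p v <-> terminates q v.
Proof. by move=> Av; split=> -[k vk]; exists k; rewrite -vk agree_iter. Qed.

End Agreement.

(** * Admissible forests and trees *)

Definition parent_on X p := (forall v, v \notin X -> p v = None) /\
  closed_under p (fun v => v \in X).
Definition acyclic p := forall v, terminates p v.
Definition admissible p :=
  forall a b c, ancestor p a b -> ancestor p b c -> a < b /\ a < c.

Definition parent_onb X p := [forall v, if v \in X
  then (if p v is Some u then u \in X else true) else p v == None].
Definition acyclicb p :=
  [forall v, [exists k : 'I_N.+1, iter k (pstep p) (Some v) == None]].
Definition admissibleb p := [forall a, forall b, forall c,
  strict_anc p a b ==> strict_anc p b c ==> (a < b) && (a < c)].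

Definition forest X p := parent_onb X p && acyclicb p.
Definition roots X p := [pred v | (v \in X) && (p v == None)].
Definition tree X p := forest X p && (#|roots X p| == 1).

(* Counting on any vertex set [X] lets the recursion delete vertices without
   relabelling; [counted_by_cardP] shows that only [#|X|] matters. *)
Definition nforests X := #|[pred p : PF | forest X p && admissibleb p]|.
Definition ntrees X := #|[pred p : PF | tree X p && admissibleb p]|.

Lemma parent_onP X p : reflect (parent_on X p) (parent_onb X p).
Proof.
apply: (iffP forallP) => [pX|[pX pXX] v].
  split=> [v vX|v u vX E]; have := pX v; first by rewrite (negbTE vX) => /eqP.
  by rewrite vX E.
case: ifP => vX; last by rewrite pX ?vX.
by case E: (p v) => [u|] //; exact: pXX E.
Qed.

Lemma acyclicP p : reflect (acyclic p) (acyclicb p).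
Proof. by apply: (iffP forallP) => p_term v; apply/terminatesP. Qed.

Lemma admissibleP p : acyclic p -> reflect (admissible p) (admissibleb p).
Proof.
move=> p_term; apply: (iffP forallP) => [p_adm a b c ab bc|p_adm a].
  have sab : strict_anc p a b by apply/(strict_ancP _ (p_term b)).
  have sbc : strict_anc p b c by apply/(strict_ancP _ (p_term c)).
  by have /forallP/(_ b)/forallP/(_ c) := p_adm a; rewrite sab ?sbc // => /andP.
apply/forallP => b; apply/forallP => c; apply/implyP => /strict_anc_ancestor ab.
by apply/implyP => /strict_anc_ancestor bc; apply/andP; exact: p_adm ab bc.
Qed.

Lemma forestP X p : reflect (parent_on X p /\ acyclic p) (forest X p).
Proof.
by apply: (iffP andP) => -[pX p_term]; split; apply/parent_onP || apply/acyclicP.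
Qed.

Lemma parent_on_edge X p w u : parent_on X p -> p w = Some u -> w \in X /\ u \in X.
Proof.
move=> [pX pXX] E; case: (boolP (w \in X)) => wX; first by split=> //; exact: pXX E.
by rewrite pX in E.
Qed.

Lemma prunes_admissible p q : prunes q p -> admissible p -> admissible q.
Proof. by move=> qp p_adm a b c /(prunes_ancestor qp) ab /(prunes_ancestor qp); apply: p_adm. Qed.

Lemma roots_card1_uniq X p u w : #|roots X p| == 1 ->
  u \in X -> p u = None -> w \in X -> p w = None -> u = w.
Proof.
case/card1P => r rE uX pu wX pw.
by have := rE u; have := rE w; rewrite !inE uX wX pu pw /= => /esym/eqP -> /esym/eqP ->.
Qed.

Definition restrict p Y : PF := [ffun v => if v \in Y then p v else None].
Definition patch Y q1 q2 : PF := [ffun v => if v \in Y then q1 v else q2 v].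

Lemma restrict_prunes p Y : prunes (restrict p Y) p.
Proof. by move=> w; rewrite ffunE; case: ifP; [left|right]. Qed.

Lemma restrict_admissible p Y : acyclic p -> admissible p ->
  acyclicb (restrict p Y) && admissibleb (restrict p Y).
Proof.
move=> p_term p_adm; have rp_term : acyclic (restrict p Y).
  by move=> v; apply/(prunes_terminates (restrict_prunes p Y)).
apply/andP; split; first exact/acyclicP.
by apply/(admissibleP rp_term)/(prunes_admissible (restrict_prunes p Y)).
Qed.

(** * Decomposition at the least vertex *)

Section MinimalVertex.
Variables (X : {set V}) (mu : V).
Hypothesis mu_in : mu \in X.
Hypothesis mu_min : forall v, v \in X -> mu <= v.

Lemma min_parent_root p r :
  parent_on X p -> admissible p -> p mu = Some r -> p r = None.
Proof.
move=> pX p_adm pmu; case E: (p r) => [s|] //.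
have [_ s_lt_mu] := p_adm s r mu (parent_ancestor E) (parent_ancestor pmu).
have [_ /mu_min mu_s] := parent_on_edge pX E.
by rewrite ltnNge mu_s in s_lt_mu.
Qed.

Lemma min_childless p r v :
  parent_on X p -> admissible p -> p mu = Some r -> p v <> Some mu.
Proof.
move=> pX p_adm pmu pv.
have [r_lt_mu _] := p_adm r mu v (parent_ancestor pmu) (parent_ancestor pv).
have [_ /mu_min mu_r] := parent_on_edge pX pmu.
by rewrite ltnNge mu_r in r_lt_mu.
Qed.

Definition top_of_min p := if p mu is Some r then r else mu.

Lemma top_of_minP p : parent_on X p -> admissible p ->
  [/\ p (top_of_min p) = None, top_of_min p \in X
    & top_of_min p = mu \/ ancestor p (top_of_min p) mu].
Proof.
move=> pX p_adm; rewrite /top_of_min; case E: (p mu) => [r|]; last by split=> //; left.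
split; [exact: min_parent_root E|by have [] := parent_on_edge pX E|].
by right; exact: parent_ancestor.
Qed.

End MinimalVertex.

Section MinimalVertexDecomposition.
Variables (X : {set V}) (mu : V).
Hypothesis mu_in : mu \in X.
Hypothesis mu_min : forall v, v \in X -> mu <= v.
Local Notation X' := (X :\ mu).

Definition detach_min p : PF := [ffun v => if p v == Some mu then None else p v].
Definition attach_min q : PF :=
  [ffun v => if (v \in X') && (q v == None) then Some mu else q v].

Lemma detach_min_prunes p : prunes (detach_min p) p.
Proof. by move=> w; rewrite ffunE; case: ifP; [right|left]. Qed.

Lemma detach_min_forest p : tree X p -> admissibleb p -> p mu = None ->
  forest X' (detach_min p) && admissibleb (detach_min p).
Proof.
case/andP => /forestP[[pX pXX] p_term] _ /(admissibleP p_term) p_adm pmu.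
have dp_term : acyclic (detach_min p).
  by move=> v; apply/(prunes_terminates (detach_min_prunes p)).
apply/andP; split; last first.
  by apply/(admissibleP dp_term)/(prunes_admissible (detach_min_prunes p)).
apply/forestP; split=> //; split.
  move=> v; rewrite !inE negb_and negbK ffunE => /orP[/eqP ->|vX].
    by rewrite pmu.
  by rewrite pX // if_same.
move=> v u; rewrite !inE ffunE => /andP[_ vX]; case: ifP => // /negbT ne E.
by rewrite (pXX v u vX E) andbT; apply: contraNneq ne => <-; apply/eqP.
Qed.

Lemma attach_min_min q : forest X' q -> attach_min q mu = None.
Proof.
by case/forestP => -[qX _] _; rewrite ffunE !inE eqxx /= qX // !inE eqxx.
Qed.

Lemma attach_min_cut q w : q w = attach_min q w \/ attach_min q w = Some mu.
Proof. by rewrite ffunE; case: ifP; [right|left]. Qed.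

Lemma attach_min_parent_on q : forest X' q -> parent_on X (attach_min q).
Proof.
case/forestP => -[qX qXX] _; split=> [v vX|v u vX].
  by rewrite ffunE !inE (negbTE vX) andbF qX // !inE (negbTE vX) andbF.
rewrite ffunE; case: ifP => [_ [<-] //|_ E].
by have [_] := parent_on_edge (conj qX qXX) E; rewrite !inE => /andP[].
Qed.

Lemma attach_min_tree q : forest X' q -> admissibleb q ->
  [&& tree X (attach_min q), admissibleb (attach_min q) & attach_min q mu == None].
Proof.
move=> q_forest; have amu := attach_min_min q_forest.
have aX := attach_min_parent_on q_forest.
case/forestP: (q_forest) => [[qX _] q_term] /(admissibleP q_term) q_adm.
have a_term : acyclic (attach_min q).
  by move=> v; apply: (cut_terminates (attach_min_cut q) amu).
rewrite amu eqxx andbT; apply/andP; split.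
  apply/andP; split; first exact/forestP.
  apply/card1P; exists mu => v; rewrite !inE.
  case: (eqVneq v mu) => [->|vmu] /=; first by rewrite mu_in amu.
  by rewrite ffunE !inE vmu /=; case: (v \in X) => //=; case: (q v).
apply/(admissibleP a_term) => a b c ab bc.
have below_mu x y : ancestor (attach_min q) x y -> y \in X /\ y != mu.
  move=> /ancestor_nonroot; case: (eqVneq y mu) => [->|]; first by rewrite amu.
  by case: (boolP (y \in X)) => // yX; rewrite (proj1 aX y yX).
have [/mu_min mu_b b_mu] := below_mu _ _ ab; have [/mu_min mu_c c_mu] := below_mu _ _ bc.
case: (cut_ancestor (attach_min_cut q) amu ab) => [qab|->]; last first.
  by move: b_mu c_mu; rewrite -!val_eqE /=; lia.
case: (cut_ancestor (attach_min_cut q) amu bc) => [qbc|bmu]; first exact: q_adm qab qbc.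
by rewrite bmu eqxx in b_mu.
Qed.

Lemma detach_attach_min q : forest X' q -> detach_min (attach_min q) = q.
Proof.
case/forestP => [[qX qXX] _]; apply/ffunP => v; rewrite !ffunE.
case: ((v \in X') && (q v == None)) / andP => [[_ /eqP ->]|_]; first by rewrite eqxx.
case: eqP => // E; case: (boolP (v \in X')) => vX; last by rewrite qX in E.
by have := qXX _ _ vX E; rewrite !inE eqxx.
Qed.

Lemma attach_detach_min p : tree X p -> p mu = None -> attach_min (detach_min p) = p.
Proof.
case/andP => /forestP[[pX pXX] _] p_roots pmu; apply/ffunP => v; rewrite !ffunE.
case: (eqVneq (p v) (Some mu)) => [E|ne] /=.
  have [vX _] := parent_on_edge (conj pX pXX) E.
  have vmu : v != mu by apply: contra_eq_neq E => ->; rewrite pmu.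
  by rewrite !inE vmu vX /= E.
case: ifP => // /andP[]; rewrite !inE => /andP[vmu vX] /eqP pv.
by move/eqP: vmu; have := roots_card1_uniq p_roots vX pv mu_in pmu.
Qed.

Definition drop_min p : PF := [ffun v => if v == mu then None else p v].
Definition root_of q : V := odflt mu [pick v | (v \in X') && (q v == None)].
Definition hang_min q : PF := [ffun v => if v == mu then Some (root_of q) else q v].

Lemma root_ofP q : tree X' q -> root_of q \in X' /\ q (root_of q) = None.
Proof.
case/andP => _ q_roots; rewrite /root_of; case: pickP => [r /andP[rX /eqP //]|none].
case/card1P: q_roots => r rE; have := rE r; rewrite [r \in roots _ _]inE /=.
by have := none r => /= ->; rewrite inE eqxx.
Qed.

Lemma drop_min_prunes p : prunes (drop_min p) p.
Proof. by move=> w; rewrite ffunE; case: ifP; [right|left]. Qed.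

Lemma drop_min_tree p : tree X p -> admissibleb p -> p mu != None ->
  tree X' (drop_min p) && admissibleb (drop_min p).
Proof.
case/andP => /forestP[[pX pXX] p_term] p_roots /(admissibleP p_term) p_adm.
case pmu: (p mu) => [r|] // _.
have dp_term : acyclic (drop_min p).
  by move=> v; apply/(prunes_terminates (drop_min_prunes p)).
have childless := min_childless mu_min (conj pX pXX) p_adm pmu.
apply/andP; split; last first.
  by apply/(admissibleP dp_term)/(prunes_admissible (drop_min_prunes p)).
apply/andP; split.
  apply/forestP; split=> //; split.
    move=> v; rewrite !inE negb_and negbK ffunE => /orP[-> //|vX].
    by rewrite pX // if_same.
  move=> v u; rewrite !inE ffunE => /andP[vmu vX]; rewrite (negbTE vmu) => E.
  by rewrite (pXX v u vX E) andbT; apply: contra_eq_neq E => ->; apply/eqP/childless.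
rewrite -(eqP p_roots); apply/eqP/eq_card => v; rewrite !inE ffunE.
by case: (eqVneq v mu) => [->|]; rewrite ?pmu ?andbF.
Qed.

Section HangMin.
Variable q : PF.
Hypothesis q_tree : tree X' q.

Lemma hang_min_agree k v : v != mu ->
  iter k (pstep (hang_min q)) (Some v) = iter k (pstep q) (Some v).
Proof.
case/andP: q_tree => /forestP[[qX qXX] _] _ vmu.
apply: (@agree_iter _ _ (fun w => w != mu)) => // [w wmu|w u _ E].
  by rewrite ffunE (negbTE wmu).
by have [_] := parent_on_edge (conj qX qXX) E; rewrite !inE => /andP[].
Qed.

Lemma hang_min_tree : tree X (hang_min q) && (hang_min q mu != None).
Proof.
have [rX rN] := root_ofP q_tree; have r_mu : root_of q != mu by case/setD1P: rX.
case/andP: q_tree => /forestP[[qX qXX] q_term] q_roots.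
rewrite ffunE eqxx andbT; apply/andP; split; last first.
  rewrite -(eqP q_roots); apply/eqP/eq_card => v; rewrite !inE ffunE.
  by case: (eqVneq v mu) => [->|] //=; rewrite andbF.
apply/forestP; split; first split.
- move=> v vX; have vmu : v != mu by apply: contraNneq vX => ->.
  by rewrite ffunE (negbTE vmu) qX // !inE negb_and vX orbT.
- move=> v u vX; rewrite ffunE; case: ifP => [_ [<-]|vmu E]; first by case/setD1P: rX.
  by have := qXX v u; rewrite !inE vmu vX => /(_ isT E) /andP[].
move=> v; case: (eqVneq v mu) => [->|vmu].
  by exists 2; rewrite /= !ffunE eqxx /= ffunE (negbTE r_mu) rN.
by case: (q_term v) => k vk; exists k; rewrite hang_min_agree.
Qed.

Lemma hang_min_admissible : admissibleb q -> admissibleb (hang_min q).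
Proof.
have [rX rN] := root_ofP q_tree; have r_mu : root_of q != mu by case/setD1P: rX.
case/andP: (q_tree) => /forestP[[qX qXX] q_term] _ /(admissibleP q_term) q_adm.
have /andP[/andP[/forestP[_ h_term] _] _] := hang_min_tree.
have h_root : hang_min q (root_of q) = None by rewrite ffunE (negbTE r_mu) rN.
have below x y : y != mu -> ancestor (hang_min q) x y -> ancestor q x y.
  by move=> ymu [k k_gt0 yk]; exists k; rewrite // -hang_min_agree.
apply/(admissibleP h_term) => a b c ab bc; case: (eqVneq c mu) => [cmu|cmu].
  move: bc; rewrite cmu => /ancestor_parent[w]; rewrite ffunE eqxx => -[<-].
  case=> [bE|/ancestor_nonroot]; last by rewrite h_root.
  by move: ab => /ancestor_nonroot; rewrite bE h_root.
have qbc := below _ _ cmu bc.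
have bmu : b != mu.
  apply: (@ancestor_closed q (fun w => w != mu) b c) => // w u _ E.
  by have [_] := parent_on_edge (conj qX qXX) E; rewrite !inE => /andP[].
exact: q_adm (below _ _ bmu ab) qbc.
Qed.

Lemma drop_hang_min : drop_min (hang_min q) = q.
Proof.
case/andP: q_tree => /forestP[[qX _] _] _; apply/ffunP => v; rewrite !ffunE.
by case: (eqVneq v mu) => [->|//]; rewrite qX // !inE eqxx.
Qed.

End HangMin.

Lemma hang_drop_min p : tree X p -> admissibleb p -> p mu != None ->
  hang_min (drop_min p) = p.
Proof.
move=> p_tree p_adm pmu; have /andP[dp_tree _] := drop_min_tree p_tree p_adm pmu.
have [rX rN] := root_ofP dp_tree.
case/andP: p_tree => /forestP[[pX pXX] p_term] p_roots.
move/(admissibleP p_term): p_adm => p_adm.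
apply/ffunP => v; rewrite !ffunE; case: (eqVneq v mu) => [->|//].
case E: (p mu) pmu => [r|] // _; congr Some.
have pr := min_parent_root mu_min (conj pX pXX) p_adm E.
have [_ r_in] := parent_on_edge (conj pX pXX) E.
move: rN; rewrite ffunE; case: ifP => [/eqP r_mu|_ rN]; first by move: rX; rewrite r_mu !inE eqxx.
by case/setD1P: rX => _ rX; exact: roots_card1_uniq p_roots rX rN r_in pr.
Qed.

Lemma ntrees_remove_min : ntrees X = nforests X' + ntrees X'.
Proof.
rewrite /ntrees -(cardID [pred p : PF | p mu == None]); congr addn.
  apply: (card_in_bij (f := detach_min) (g := attach_min)).
  - by move=> p; rewrite !inE => /andP[/andP[? ?] /eqP ?]; exact: detach_min_forest.
  - by move=> q; rewrite !inE => /andP[q_forest q_adm]; case/and3P: (attach_min_tree q_forest q_adm) => -> -> ->.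
  - by move=> p; rewrite !inE => /andP[/andP[? _] /eqP ?]; rewrite attach_detach_min.
  - by move=> q; rewrite !inE => /andP[? _]; rewrite detach_attach_min.
apply: (card_in_bij (f := drop_min) (g := hang_min)).
- by move=> p; rewrite !inE => /andP[? /andP[? ?]]; exact: drop_min_tree.
- move=> q; rewrite !inE => /andP[q_tree q_adm].
  by case/andP: (hang_min_tree q_tree) => -> ->; rewrite hang_min_admissible.
- by move=> p; rewrite !inE => /andP[? /andP[? ?]]; rewrite hang_drop_min.
- by move=> q; rewrite !inE => /andP[? _]; rewrite drop_hang_min.
Qed.

Definition min_component p : {set V} :=
  [set v | (v == top_of_min mu p) || strict_anc p (top_of_min mu p) v].

Lemma min_componentP p v : acyclic p ->
  reflect (v = top_of_min mu p \/ ancestor p (top_of_min mu p) v) (v \in min_component p).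
Proof.
move=> p_term; rewrite inE; apply: (iffP orP) => -[/eqP|]; try by [left|right].
  by move/strict_anc_ancestor; right.
by move/(strict_ancP _ (p_term v)); right.
Qed.

Definition component_split (t : {set V} * PF * PF) := [&& t.1.1 \subset X, mu \in t.1.1,
  tree t.1.1 t.1.2 && admissibleb t.1.2 & forest (X :\: t.1.1) t.2 && admissibleb t.2].

Definition split_min_component p : {set V} * PF * PF :=
  (min_component p, restrict p (min_component p), restrict p (X :\: min_component p)).

Definition unsplit (t : {set V} * PF * PF) : PF := patch t.1.1 t.1.2 t.2.

Section Split.
Variable p : PF.
Hypotheses (pX : parent_on X p) (p_term : acyclic p) (p_adm : admissible p).
Local Notation Y := (min_component p).
Local Notation r := (top_of_min mu p).

Lemma min_component_sub : Y \subset X.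
Proof.
have [_ rX _] := top_of_minP mu_in mu_min pX p_adm.
apply/subsetP => v /(min_componentP _ p_term)[->//|/ancestor_nonroot].
by apply: contraNT => vX; rewrite (proj1 pX v vX).
Qed.

Lemma min_in_component : mu \in Y.
Proof.
have [_ _ r_mu] := top_of_minP mu_in mu_min pX p_adm.
by apply/(min_componentP _ p_term); case: r_mu => [->|]; [left|right].
Qed.

Lemma restrict_min_component_tree : tree Y (restrict p Y).
Proof.
have [pr _ _] := top_of_minP mu_in mu_min pX p_adm.
have /andP[/acyclicP rp_term _] := restrict_admissible Y p_term p_adm.
apply/andP; split.
  apply/forestP; split=> //.
  split=> [v vY|v u vY]; first by rewrite ffunE (negbTE vY).
  rewrite ffunE vY => E; apply/(min_componentP _ p_term).
  case/(min_componentP _ p_term): vY => [vr|rv]; first by rewrite vr pr in E.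
  by case: (ancestor_parent rv) => w; rewrite E => -[<-] [->|]; [left|right].
apply/card1P; exists r => v; rewrite [v \in roots _ _]inE [v \in pred1 _]inE /= ffunE.
case: (boolP (v \in Y)) => vY /=.
  case/(min_componentP _ p_term): (vY) => [->|rv]; first by rewrite pr !eqxx.
  rewrite (negbTE (ancestor_nonroot rv)); apply/esym/eqP => vr.
  by rewrite vr in rv; exact: ancestor_irrefl (p_term r) rv.
apply/esym/eqP => vr; move: vY; rewrite vr.
by move/negP; apply; apply/(min_componentP _ p_term); left.
Qed.

Lemma restrict_rest_forest : forest (X :\: Y) (restrict p (X :\: Y)).
Proof.
have /andP[/acyclicP rp_term _] := restrict_admissible (X :\: Y) p_term p_adm.
apply/forestP; split=> //.
split=> [v vY|v u vY]; first by rewrite ffunE (negbTE vY).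
rewrite ffunE vY => E; move: vY; rewrite in_setD => /andP[vnY _].
have [_ uX] := parent_on_edge pX E; rewrite in_setD uX andbT.
apply: contra vnY => /(min_componentP _ p_term) ru; apply/(min_componentP _ p_term); right.
by case: ru => [<-|ru]; [exact: parent_ancestor|exact: ancestor_trans ru (parent_ancestor E)].
Qed.

Lemma split_min_componentP : component_split (split_min_component p).
Proof.
rewrite /component_split /= min_component_sub min_in_component.
rewrite restrict_min_component_tree restrict_rest_forest.
by have /andP[_ ->] := restrict_admissible Y p_term p_adm;
  have /andP[_ ->] := restrict_admissible (X :\: Y) p_term p_adm.
Qed.

Lemma unsplit_min_component : unsplit (split_min_component p) = p.
Proof.
apply/ffunP => v; rewrite /unsplit /= !ffunE.
case: (boolP (v \in Y)) => vY //; rewrite in_setD vY /=.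
by case: (boolP (v \in X)) => // vX; rewrite (proj1 pX).
Qed.

End Split.

Section Join.
Variables (Y : {set V}) (q1 q2 : PF).
Hypotheses (YX : Y \subset X) (mu_Y : mu \in Y).
Hypotheses (q1_tree : tree Y q1) (q1_adm : admissibleb q1).
Hypotheses (q2_forest : forest (X :\: Y) q2) (q2_adm : admissibleb q2).
Local Notation p := (patch Y q1 q2).

Lemma patch_in w : w \in Y -> p w = q1 w.
Proof. by move=> wY; rewrite ffunE wY. Qed.

Lemma patch_out w : w \notin Y -> p w = q2 w.
Proof. by move=> wY; rewrite ffunE (negbTE wY). Qed.

Lemma q1_closed : closed_under q1 (fun w => w \in Y).
Proof. by case/andP: q1_tree => /forestP[[_ ?] _]. Qed.

Lemma q2_closed : closed_under q2 (fun w => w \notin Y).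
Proof.
case/forestP: q2_forest => [q2X _] w u _ /(parent_on_edge q2X)[_].
by rewrite in_setD => /andP[].
Qed.

Lemma patch_terminates : acyclic p.
Proof.
case/andP: q1_tree => /forestP[_ q1_term] _; case/forestP: q2_forest => _ q2_term v.
case: (boolP (v \in Y)) => vY.
  by apply/(agree_terminates patch_in q1_closed vY).
by apply/(agree_terminates patch_out q2_closed vY).
Qed.

Lemma patch_ancestor_in a v : v \in Y -> ancestor p a v -> ancestor q1 a v /\ a \in Y.
Proof.
move=> vY /(agree_ancestor patch_in q1_closed _ vY) av.
by split=> //; exact: ancestor_closed q1_closed vY av.
Qed.

Lemma patch_ancestor_out a v :
  v \notin Y -> ancestor p a v -> ancestor q2 a v /\ a \notin Y.
Proof.
move=> vY /(agree_ancestor patch_out q2_closed _ vY) av.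
by split=> //; exact: ancestor_closed q2_closed vY av.
Qed.

Lemma patch_forest : forest X p && admissibleb p.
Proof.
case/andP: q1_tree => /forestP[[q1Y q1YY] q1_term] _.
case/forestP: q2_forest => [[q2X q2XX] q2_term].
move/(admissibleP q1_term): q1_adm => q1_adm'; move/(admissibleP q2_term): q2_adm => q2_adm'.
apply/andP; split.
  apply/forestP; split; last exact: patch_terminates.
  split=> [v vX|v u vX].
    have vY : v \notin Y by apply: contra vX; apply: (subsetP YX).
    by rewrite patch_out // q2X // in_setD vY.
  case: (boolP (v \in Y)) => vY.
    by rewrite patch_in // => /(q1YY _ _ vY); apply: (subsetP YX).
  rewrite patch_out // => /(q2XX v u); rewrite !in_setD vY vX => /(_ isT).
  by case/andP.
apply/(admissibleP patch_terminates) => a b c ab bc.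
case: (boolP (c \in Y)) => cY.
  have [q1bc bY] := patch_ancestor_in cY bc; have [q1ab _] := patch_ancestor_in bY ab.
  exact: q1_adm' q1ab q1bc.
have [q2bc bY] := patch_ancestor_out cY bc; have [q2ab _] := patch_ancestor_out bY ab.
exact: q2_adm' q2ab q2bc.
Qed.

Lemma min_component_patch : min_component p = Y.
Proof.
case/andP: (q1_tree) => /forestP[[q1Y q1YY] q1_term] q1_roots.
move/(admissibleP q1_term): q1_adm => q1_adm'.
have mu_minY v : v \in Y -> mu <= v by move=> vY; apply/mu_min/(subsetP YX).
have topE : top_of_min mu p = top_of_min mu q1 by rewrite /top_of_min patch_in.
have [q1r rY _] := top_of_minP mu_Y mu_minY (conj q1Y q1YY) q1_adm'.
apply/setP => v; apply/(min_componentP _ patch_terminates)/idP; rewrite topE.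
  case=> [->//|rv]; apply: contraT => vY.
  by have [_ /negP] := patch_ancestor_out vY rv.
move=> vY; have [w wv w_root] := root_above (q1_term v).
have wY : w \in Y by case: wv => [->//|]; exact: ancestor_closed q1_closed vY.
rewrite -(roots_card1_uniq q1_roots wY w_root rY q1r).
case: wv => [->|wv]; [by left|right].
exact/(agree_ancestor patch_in q1_closed _ vY).
Qed.

Lemma split_unsplit : split_min_component p = (Y, q1, q2).
Proof.
case/andP: (q1_tree) => /forestP[[q1Y _] _] _; case/forestP: (q2_forest) => [[q2X _] _].
rewrite /split_min_component min_component_patch; congr (_, _, _).
  by apply/ffunP => v; rewrite !ffunE; case: (boolP (v \in Y)) => // vY; rewrite q1Y.
apply/ffunP => v; rewrite !ffunE; case: (boolP (v \in Y)) => vY /=.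
  by rewrite in_setD vY /= q2X // in_setD vY.
by case: ifP => // /negbT vXY; rewrite q2X.
Qed.

End Join.

Lemma nforests_split_min : nforests X =
  \sum_(Y : {set V} | (Y \subset X) && (mu \in Y)) ntrees Y * nforests (X :\: Y).
Proof.
have -> : nforests X = #|[pred t | component_split t]|.
  apply: (card_in_bij (f := split_min_component) (g := unsplit)).
  - move=> p; rewrite !inE => /andP[/forestP[pX p_term] /(admissibleP p_term) p_adm].
    exact: split_min_componentP.
  - move=> [[Y q1] q2]; rewrite !inE => /and4P[/= YX mu_Y /andP[? ?] /andP[? ?]].
    exact: patch_forest.
  - move=> p; rewrite !inE => /andP[/forestP[pX p_term] /(admissibleP p_term) p_adm].
    exact: unsplit_min_component.
  - move=> [[Y q1] q2]; rewrite !inE => /and4P[/= YX mu_Y /andP[? ?] /andP[? ?]].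
    exact: split_unsplit.
rewrite -sum1_card; symmetry.
transitivity (\sum_(Y : {set V} | (Y \subset X) && (mu \in Y))
  \sum_(q1 : PF | tree Y q1 && admissibleb q1)
  \sum_(q2 : PF | forest (X :\: Y) q2 && admissibleb q2) 1).
  apply: eq_bigr => Y _; rewrite /ntrees /nforests -!sum1_card big_distrl /=.
  by apply: eq_bigr => q1 _; rewrite mul1n.
rewrite pair_big_dep pair_big_dep /=.
by apply: eq_bigl => -[[Y q1] q2]; rewrite inE /component_split /= !andbA.
Qed.

End MinimalVertexDecomposition.

(** * Pattern avoidance *)

(* The standardization of a word [a b c] of distinct labels. *)
Definition pattern3 (a b c : nat) : seq nat :=
  [:: ((b < a) + (c < a)).+1; ((a < b) + (c < b)).+1; ((a < c) + (b < c)).+1].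

Lemma chain_contains_pattern3 p (a b c : V) : strict_anc p a b -> strict_anc p b c ->
  a != b -> b != c -> a != c -> contains p (pattern3 a b c).
Proof.
rewrite -!val_eqE => ab bc /eqP ? /eqP ? /eqP ?.
apply/existsP; exists [tuple a; b; c]; rewrite /= ab bc /=.
apply/forallP => -[[|[|[|i]]] ?] //; apply/forallP => -[[|[|[|j]]] ?] //;
  by rewrite !(tnth_nth a) /=; apply/eqP; lia.
Qed.

Lemma contains3_first_min p (x y z : nat) :
  admissible p -> contains p [:: x; y; z] -> (x < y) && (x < z).
Proof.
move=> p_adm /existsP[[l sz] /andP[l_sorted /forallP ord]].
case: l sz l_sorted ord => [|a [|b [|c [|]]]] // sz /and3P[ab bc _] ord.
have [lt_ab lt_ac] := p_adm a b c (strict_anc_ancestor ab) (strict_anc_ancestor bc).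
have /forallP/(_ (inord 1))/eqP := ord (inord 0).
have /forallP/(_ (inord 2))/eqP := ord (inord 0).
by rewrite !(tnth_nth a) /= !inordK //= lt_ab lt_ac => <- <-.
Qed.

Lemma avoids_S5p12 p : acyclic p -> avoids p S5p12 = admissibleb p.
Proof.
move=> p_term; apply/idP/(admissibleP p_term) => [p_avoids a b c ab bc|p_adm].
  have ne_ab : a != b by apply/eqP => eab; apply: (ancestor_irrefl (p_term b)); rewrite -{1}eab.
  have ne_bc : b != c by apply/eqP => ebc; apply: (ancestor_irrefl (p_term c)); rewrite -{1}ebc.
  have ne_ac : a != c.
    apply/eqP => eac; apply: (ancestor_irrefl (p_term c)).
    by rewrite -{1}eac; exact: ancestor_trans ab bc.
  apply/andP; apply: contraT => a_not_min.
  have : pattern3 a b c \in S5p12.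
    move: ne_ab ne_bc ne_ac a_not_min; rewrite -!val_eqE /pattern3 /=.
    by case: (ltngtP a b); case: (ltngtP a c); case: (ltngtP b c) => //=; lia.
  move/(allP p_avoids); rewrite chain_contains_pattern3 //.
    by apply/(strict_ancP _ (p_term b)).
  by apply/(strict_ancP _ (p_term c)).
apply/allP => pi; rewrite !inE => /or4P[] /eqP ->;
  by apply/negP => /(contains3_first_min p_adm).
Qed.

Lemma rooted_tree_setT p : is_rooted_tree p = tree [set: V] p.
Proof.
rewrite /is_rooted_tree /tree /forest andbC; congr (_ && _).
  have -> : parent_onb [set: V] p.
    by apply/forallP => v; rewrite in_setT; case: (p v) => // u; rewrite in_setT.
  by [].
by congr (_ == 1); apply: eq_card => v; rewrite !inE.
Qed.

Lemma tcount_ntrees : tcount S5p12 N = ntrees [set: V].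
Proof.
apply: eq_card => p; rewrite !inE rooted_tree_setT.
case p_tree: (tree [set: V] p) => //=.
by case/andP: p_tree => /forestP[_ p_term] _; exact: avoids_S5p12.
Qed.

End ParentFunctions.

(** * Counts depend only on the number of vertices *)

Lemma ntrees_set0 N : ntrees (set0 : {set 'I_N}) = 0.
Proof.
apply: eq_card0 => p; rewrite !inE /tree.
suff -> : #|roots set0 p| = 0 by rewrite andbF.
by apply: eq_card0 => v; rewrite inE in_set0.
Qed.

Lemma nforests_set0 N : nforests (set0 : {set 'I_N}) = 1.
Proof.
apply/eqP/card1P; exists [ffun => None] => p; rewrite !inE; apply/idP/eqP.
  case/andP => /forestP[[p0 _] _] _; apply/ffunP => v.
  by rewrite ffunE p0 // in_set0.
move=> ->; have p_term : acyclic ([ffun => None] : {ffun 'I_N -> option 'I_N}).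
  by exists 1; rewrite /= ffunE.
apply/andP; split; first by apply/forestP; split=> //; split=> [v|v u]; rewrite ffunE.
by apply/(admissibleP p_term) => a b c /ancestor_nonroot; rewrite ffunE.
Qed.

Lemma sum_subsets_card (T : finType) (A : {set T}) (F : nat -> nat) :
  \sum_(Z : {set T} | Z \subset A) F #|Z| = \sum_(k < #|A|.+1) 'C(#|A|, k) * F k.
Proof.
rewrite (partition_big (fun Z : {set T} => (inord #|Z| : 'I_#|A|.+1)) xpredT) //=.
apply: eq_bigr => k _; rewrite (eq_bigr (fun _ => F k)); last first.
  by move=> Z /andP[ZA /eqP <-]; rewrite inordK // ltnS subset_leq_card.
rewrite sum_nat_const -cards_draws; congr muln; apply: eq_card => Z; rewrite !inE.
rewrite unfold_in /=; case ZA: (Z \subset A) => //=.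
by rewrite -val_eqE /= inordK // ltnS subset_leq_card.
Qed.

Lemma sum_subsets_containing (T : finType) (X : {set T}) (mu : T) (F : nat -> nat) :
  mu \in X -> \sum_(Y : {set T} | (Y \subset X) && (mu \in Y)) F #|Y| =
    \sum_(k < #|X|) 'C(#|X|.-1, k) * F k.+1.
Proof.
move=> mu_in; rewrite (reindex_onto (fun Z => mu |: Z) (fun Y => Y :\ mu)); last first.
  by move=> Y /andP[_ mu_Y]; rewrite setD1K.
rewrite (cardsD1 mu X) mu_in /= -(sum_subsets_card (X :\ mu) (fun k => F k.+1)).
apply: eq_big => [Z|Z /andP[_ /eqP <-]]; last by rewrite cardsU1 !inE eqxx.
rewrite subUset sub1set mu_in setU11 andbT /= subsetD1.
case: (boolP (mu \in Z)) => mu_Z; last by rewrite setU1K // eqxx.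
rewrite andbF; apply: contraTF mu_Z => /andP[_ /eqP <-].
by rewrite !inE eqxx.
Qed.

Lemma exists_min_vertex N (X : {set 'I_N}) :
  X != set0 -> exists2 mu, mu \in X & forall v, v \in X -> mu <= v.
Proof.
case/set0Pn => x0 x0X.
by case: (arg_minnP (fun i : 'I_N => i : nat) x0X) => mu; exists mu.
Qed.

Definition tree_count m := ntrees [set: 'I_m].
Definition forest_count m := nforests [set: 'I_m].

Definition counted_by_card s := forall N (X : {set 'I_N}),
  #|X| = s -> ntrees X = tree_count s /\ nforests X = forest_count s.

Lemma card_setT_ord m : #|[set: 'I_m]| = m.
Proof. by rewrite cardsT card_ord. Qed.

Lemma ntrees_succ n N (X : {set 'I_N}) : counted_by_card n ->
  #|X| = n.+1 -> ntrees X = forest_count n + tree_count n.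
Proof.
move=> count_n X_card; have [|mu mu_in mu_min] := exists_min_vertex (X := X).
  by rewrite -card_gt0 X_card.
rewrite (ntrees_remove_min mu_in mu_min).
have X'_card : #|X :\ mu| = n by move: X_card; rewrite (cardsD1 mu X) mu_in => -[].
by have [-> ->] := count_n _ _ X'_card.
Qed.

Lemma nforests_succ n N (X : {set 'I_N}) : (forall s, s <= n -> counted_by_card s) ->
  (forall N' (Z : {set 'I_N'}), #|Z| = n.+1 -> ntrees Z = tree_count n.+1) ->
  #|X| = n.+1 ->
  nforests X = \sum_(k < n.+1) 'C(n, k) * tree_count k.+1 * forest_count (n - k).
Proof.
move=> count_le_n ntrees_n1 X_card.
have [|mu mu_in mu_min] := exists_min_vertex (X := X).
  by rewrite -card_gt0 X_card.
rewrite (nforests_split_min mu_in mu_min).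
transitivity (\sum_(k < #|X|) 'C(#|X|.-1, k) *
  (tree_count k.+1 * forest_count (#|X| - k.+1))); last first.
  by rewrite X_card; apply: eq_bigr => k _; rewrite mulnA subSS.
rewrite -(sum_subsets_containing (fun y => tree_count y * forest_count (#|X| - y)) mu_in).
apply: eq_bigr => Y /andP[YX mu_Y].
have YleX : #|Y| <= #|X| by exact: subset_leq_card.
have Y_gt0 : 0 < #|Y| by rewrite card_gt0; apply/set0Pn; exists mu.
have XY_card : #|X :\: Y| = #|X| - #|Y| by rewrite cardsD (setIidPr YX).
congr muln.
  case: (ltngtP #|Y| n.+1) => [lt|gt|eq]; last by rewrite eq; exact: ntrees_n1.
    by have [] := count_le_n _ lt _ Y erefl.
  by move: gt; rewrite -X_card ltnNge YleX.
have XY_le : #|X| - #|Y| <= n by rewrite X_card; lia.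
by have [] := count_le_n _ XY_le _ _ XY_card.
Qed.

Lemma tree_count0 : tree_count 0 = 0.
Proof. by rewrite /tree_count (cards0_eq (card_setT_ord 0)) ntrees_set0. Qed.

Lemma forest_count0 : forest_count 0 = 1.
Proof. by rewrite /forest_count (cards0_eq (card_setT_ord 0)) nforests_set0. Qed.

Lemma counted_by_cardP s : counted_by_card s.
Proof.
elim/ltn_ind: s => -[|n] IH N X X_card.
  by rewrite (cards0_eq X_card) tree_count0 forest_count0 ntrees_set0 nforests_set0.
have count_le_n s : s <= n -> counted_by_card s by move=> le_sn; apply: IH.
have ntrees_n1 N' (Z : {set 'I_N'}) : #|Z| = n.+1 -> ntrees Z = tree_count n.+1.
  move=> Z_card; rewrite /tree_count (ntrees_succ (IH n _) Z_card) //.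
  by rewrite (ntrees_succ (IH n _) (card_setT_ord n.+1)).
split; first exact: ntrees_n1.
rewrite /forest_count (nforests_succ count_le_n ntrees_n1 X_card).
by rewrite (nforests_succ count_le_n ntrees_n1 (card_setT_ord n.+1)).
Qed.

Lemma tree_countS n : tree_count n.+1 = tree_count n + forest_count n.
Proof.
by rewrite {1}/tree_count (ntrees_succ (@counted_by_cardP n) (card_setT_ord n.+1)) addnC.
Qed.

Lemma forest_countS n :
  forest_count n.+1 = \sum_(k < n.+1) 'C(n, k) * tree_count k.+1 * forest_count (n - k).
Proof.
rewrite {1}/forest_count (nforests_succ _ _ (card_setT_ord n.+1)) // => [s _|N Z].
  exact: counted_by_cardP.
by case/counted_by_cardP.
Qed.

(** * Exponential generating functions *)

Local Open Scope ring_scope.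

Section FpsExp.
Variable a : fps.
Hypothesis a0 : a 0%N = 0.

Lemma fps_pow_small k n : (n < k)%N -> fps_pow a k n = 0.
Proof.
elim: k n => [//|k IH] n lt_nk; rewrite /fps_pow iterS -/(fps_pow a k).
rewrite /fps_mul big1 // => -[[|i] lt_in] _ /=; first by rewrite a0 mul0r.
by rewrite IH ?mulr0 //; lia.
Qed.

(* Below degree [M], [fps_pow a] and [fps_exp a] are coefficients of polynomials
   in the truncation of [a], where the derivation rules of [{poly _}] apply. *)
Definition fps_trunc (M : nat) : {poly rat} := \poly_(i < M) a i.

Lemma fps_pow_trunc M k n : (n < M)%N -> fps_pow a k n = (fps_trunc M ^+ k)`_n.
Proof.
elim: k n => [|k IH] n lt_nM; first by rewrite expr0 coef1; case: n lt_nM.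
rewrite /fps_pow iterS -/(fps_pow a k) exprS coefM; apply: eq_bigr => -[i lt_in] _ /=.
by rewrite coef_poly IH; [rewrite (leq_ltn_trans _ lt_nM)|lia].
Qed.

Definition exp_trunc (K M : nat) : {poly rat} :=
  \sum_(k < K) (k`!)%:R^-1 *: fps_trunc M ^+ k.

Lemma fps_exp_trunc K M n : (n < K)%N -> (n < M)%N -> fps_exp a n = (exp_trunc K M)`_n.
Proof.
move=> lt_nK lt_nM; rewrite /fps_exp /exp_trunc coef_sum.
under [RHS]eq_bigr do rewrite coefZ -fps_pow_trunc // mulrC.
rewrite -!(big_mkord xpredT (fun k => fps_pow a k n / (k`!)%:R)).
rewrite [RHS](big_cat_nat (n := n.+1)) //= [X in _ + X]big1_seq ?addr0 //.
by move=> k /andP[_]; rewrite mem_index_iota => /andP[le_nk _]; rewrite fps_pow_small ?mul0r.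
Qed.

Lemma deriv_exp_trunc K M : (exp_trunc K.+1 M)^`() = (fps_trunc M)^`() * exp_trunc K M.
Proof.
rewrite /exp_trunc big_ord_recl /= expr0 derivD alg_polyC derivC add0r.
rewrite raddf_sum mulr_sumr; apply: eq_bigr => i _.
rewrite /bump /= add1n derivZ deriv_exp /= -scalerAr -scaler_nat scalerA.
by rewrite factS natrM invfM mulrC mulrA mulfV ?mul1r // pnatr_eq0.
Qed.

Lemma fps_deriv_exp n :
  fps_deriv (fps_exp a) n = fps_mul (fps_deriv a) (fps_exp a) n.
Proof.
rewrite /fps_deriv (@fps_exp_trunc n.+2 n.+2 n.+1) //.
rewrite mulr_natl -coef_deriv deriv_exp_trunc coefM.
apply: eq_bigr => -[i lt_in] _ /=.
rewrite coef_deriv coef_poly (@fps_exp_trunc n.+1 n.+2 (n - i)) ?ifT ?mulr_natl //; lia.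
Qed.

End FpsExp.

Lemma natr_fact_neq0 n : (n`!)%:R != 0 :> rat.
Proof. by rewrite pnatr_eq0 -lt0n fact_gt0. Qed.

Lemma fps_deriv_egf (t : nat -> nat) n :
  fps_deriv (egf t) n = (t n.+1)%:R / (n`!)%:R.
Proof.
rewrite /fps_deriv /egf factS natrM.
by field; rewrite natr_fact_neq0 nat1r pnatr_eq0.
Qed.

Lemma fps_exp_egf (t f : nat -> nat) : t 0%N = 0%N -> f 0%N = 1%N ->
  (forall n, f n.+1 = \sum_(k < n.+1) 'C(n, k) * t k.+1 * f (n - k))%N ->
  forall n, fps_exp (egf t) n = egf f n.
Proof.
move=> t0 f0 fS; have T0 : egf t 0%N = 0 by rewrite /egf t0 mul0r.
elim/ltn_ind => -[|n] IH.
  by rewrite /fps_exp big_ord1 /egf f0 /= /fps_one !divr1.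
have conv : fps_mul (fps_deriv (egf t)) (fps_exp (egf t)) n = (f n.+1)%:R / (n`!)%:R.
  rewrite fS natr_sum mulr_suml; apply: eq_bigr => -[i lt_in] _ /=.
  rewrite fps_deriv_egf IH /egf; last by lia.
  rewrite -[in RHS](bin_fact (_ : i <= n)%N) // !natrM.
  by field; rewrite !natr_fact_neq0 pnatr_eq0 -lt0n bin_gt0 -ltnS.
apply: (@mulfI _ (n.+1)%:R); first by rewrite pnatr_eq0.
rewrite -[_ * _]/(fps_deriv (fps_exp (egf t)) n) fps_deriv_exp // conv /egf factS natrM.
by field; rewrite natr_fact_neq0 nat1r pnatr_eq0.
Qed.

Lemma egf_ode_of_recurrences (t f : nat -> nat) : t 0%N = 0%N -> f 0%N = 1%N ->
  (forall n, t n.+1 = t n + f n)%N ->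
  (forall n, f n.+1 = \sum_(k < n.+1) 'C(n, k) * t k.+1 * f (n - k))%N ->
  let T := egf t in
  T 0%N = 0 /\ (forall n : nat, fps_deriv T n = T n + fps_exp T n).
Proof.
move=> t0 f0 tS fS T; split; first by rewrite /T /egf t0 mul0r.
by move=> n; rewrite fps_deriv_egf (fps_exp_egf t0 f0 fS) /T /egf tS natrD mulrDl.
Qed.

Theorem proposition5p12 :
  let T := egf (tcount S5p12) in
  T 0%N = 0 /\ (forall n : nat, fps_deriv T n = T n + fps_exp T n).
Proof.
have tE n : tcount S5p12 n = tree_count n by exact: tcount_ntrees.
apply: (egf_ode_of_recurrences (f := forest_count)).
- by rewrite tE tree_count0.
- exact: forest_count0.
- by move=> n; rewrite !tE tree_countS.
- by move=> n; rewrite forest_countS; apply: eq_bigr => k _; rewrite tE.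
Qed.
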